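(* Let $\Gamma_1,\Gamma_2\subseteq\{0,1\}^\infty$. If a learning function $l_1$ uniformly weakly detects that every $X\in\Gamma_1$ is patterned and a learning function $l_2$ uniformly weakly detects that every $X\in\Gamma_2$ is patterned, then there exists a learning function $l_3$ that uniformly weakly detects that every $X\in\Gamma_1\cup\Gamma_2$ is patterned. Moreover, if $l_1$ and $l_2$ are computable, then $l_3$ can be chosen computable.
   Context: A learning function is a function $l:\{0,1\}^*\to\{\mathrm{yes},\mathrm{no}\}$. $Y\upharpoonright m$ is the length-$m$ prefix of $Y$; $\lambda$ is the uniform (Lebesgue) measure on $\{0,1\}^\infty$. A learning function $l$ uniformly weakly detects that $X$ is patterned iff (i) $l(X\upharpoonright m)=\mathrm{yes}$ for infinitely many $m$, and (ii) for all $n\in\mathbb N$, $\lambda(\{Y : \#\{m: l(Y\upharpoonright m)=\mathrm{yes}\}\ge n\})\le 2^{-n}$. *)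

From mathcomp Require Import all_boot all_order all_algebra.
From mathcomp Require Import all_classical all_reals ereal sequences.
From mathcomp Require Import Rstruct.
Set Implicit Arguments. Unset Strict Implicit. Unset Printing Implicit Defensive.
Import Order.TTheory GRing.Theory Num.Theory.
Local Open Scope classical_set_scope.
Local Open Scope ring_scope.

Definition cantor := nat -> bool.
Definition bstring := seq bool.

(* A learning function l : {0,1}^* -> {yes,no}; yes = true, no = false. *)
Definition learning_fn := bstring -> bool.

Definition pre (Y : cantor) (m : nat) : bstring := mkseq Y m.

Definition cyl (s : bstring) : set cantor := [set Y | pre Y (size s) = s].

(* The uniform (Lebesgue / fair-coin) measure lambda on {0,1}^oo, given by the
   standard Caratheodory outer measure generated by lambda([s]) = 2^-|s|:
   lambda(A) = inf { sum_i 2^-|c i| : A is covered by the cylinders [c i] }.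
   On Borel sets this is the uniform measure. *)
Definition lambda (A : set cantor) : \bar Rdefinitions.R :=
  ereal_inf [set (\sum_(0 <= i <oo) ((2%:R : Rdefinitions.R) ^- size (c i))%:E)%E
            | c in [set c : nat -> bstring | A `<=` \bigcup_i cyl (c i)]].

(* #{ m : l (Y|`m) = yes } >= n  (the set may be infinite). *)
Definition yes_count_ge (l : learning_fn) (Y : cantor) (n : nat) : Prop :=
  exists ms : seq nat, [/\ uniq ms, size ms = n & all (fun m => l (pre Y m)) ms].

Definition unif_weak_detects (l : learning_fn) (X : cantor) : Prop :=
  (forall N : nat, exists2 m : nat, (N <= m)%N & l (pre X m)) /\
  (forall n : nat, (lambda [set Y | yes_count_ge l Y n] <= ((2%:R : Rdefinitions.R) ^- n)%:E)%E).

Definition unif_weak_detects_all (l : learning_fn) (G : set cantor) : Prop :=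
  forall X, G X -> unif_weak_detects l X.

(* Codes; arguments are lists of naturals (missing arguments read as 0). *)
Inductive prf : Type :=
| PZero : prf
| PSucc : prf
| PProj : nat -> prf
| PComp : prf -> seq prf -> prf
| PRec  : prf -> prf -> prf
| PMu   : prf -> prf.

Inductive peval : prf -> seq nat -> nat -> Prop :=
| ev_zero xs : peval PZero xs 0
| ev_succ xs : peval PSucc xs (nth 0 xs 0).+1
| ev_proj i xs : peval (PProj i) xs (nth 0 xs i)
| ev_comp f gs xs ys y :
    pevals gs xs ys -> peval f ys y -> peval (PComp f gs) xs y
| ev_rec0 g h xs y : peval g xs y -> peval (PRec g h) (0 :: xs) y
| ev_recS g h n xs y z :
    peval (PRec g h) (n :: xs) y -> peval h (n :: y :: xs) z ->
    peval (PRec g h) (n.+1 :: xs) z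
| ev_mu f xs n :
    peval f (n :: xs) 0 ->
    (forall k, (k < n)%N -> exists2 v, peval f (k :: xs) v & v <> 0) ->
    peval (PMu f) xs n
with pevals : seq prf -> seq nat -> seq nat -> Prop :=
| evs_nil xs : pevals [::] xs [::]
| evs_cons g gs xs y ys :
    peval g xs y -> pevals gs xs ys -> pevals (g :: gs) xs (y :: ys).

(* Binary strings coded bijectively as positive naturals: s |-> the number
   whose binary expansion is 1 followed by s. *)
Definition enc (s : bstring) : nat := foldl (fun n (b : bool) => (n.*2 + b)%N) 1%N s.

Definition computable (l : learning_fn) : Prop :=
  exists c : prf, forall s : bstring, peval c [:: enc s] (nat_of_bool (l s)).

From mathcomp Require Import all_boot all_order all_algebra all_classical all_reals ereal sequences.
From mathcomp Require Import Rstruct.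
From mathcomp Require Import zify.
Import Order.TTheory GRing.Theory Num.Theory.
Set Implicit Arguments. Unset Strict Implicit. Unset Printing Implicit Defensive.
Local Open Scope classical_set_scope.

(* Run l1 and l2 in parallel and answer yes exactly when the larger of their two
   yes-counts on the prefixes seen so far reaches a new value >= 2.  Along any Y
   the combined learner has then said yes max(c1, c2) - 1 times, so n + 1 of its
   yeses force n + 2 yeses of l1 or of l2, an event of measure at most
   2 * 2^-(n+2) = 2^-(n+1); and infinitely many yeses of either learner make the
   maximum, hence the combined count, unbounded.  The combined learner is
   computable from l1 and l2, reading the prefixes of a string off its binary
   code by repeated halving.  When one of the classes is empty, its learner
   need not satisfy the measure bound, and the other learner is used alone. *)

(** * Counting yes answers *)

Section CountingHits.
Variable P : pred nat.

Lemma count_iotaS m : count P (iota 0 m.+1) = count P (iota 0 m) + P m.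
Proof. by rewrite -addn1 iotaD count_cat /= addn0. Qed.

Lemma count_iota_le m : count P (iota 0 m) <= m.
Proof. by rewrite -[leqRHS](size_iota 0) count_size. Qed.

Lemma count_iota_mono m k : m <= k -> count P (iota 0 m) <= count P (iota 0 k).
Proof. by move=> /subnKC <-; rewrite iotaD count_cat leq_addr. Qed.

Lemma distinct_hitsP n :
  (exists ms : seq nat, [/\ uniq ms, size ms = n & all P ms]) <->
  exists m, n <= count P (iota 0 m).
Proof.
split=> [[ms [ums <- Pms]] | [m hm]].
  exists (\max_(k <- ms) k).+1; rewrite -size_filter.
  apply: uniq_leq_size => // k kms; rewrite mem_filter mem_iota (allP Pms) //=.
  by rewrite ltnS (@leq_bigmax_seq _ ms xpredT (fun i => i) k kms).
exists (take n [seq k <- iota 0 m | P k]); split.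
- by rewrite take_uniq // filter_uniq // iota_uniq.
- by rewrite size_take size_filter; case: ltngtP hm => //; lia.
- by apply/allP => k /mem_take; rewrite mem_filter => /andP[].
Qed.

Lemma infinitely_many_hitsP :
  (forall N, exists2 m, N <= m & P m) <-> forall K, exists m, K <= count P (iota 0 m).
Proof.
split=> [hP | hK N].
  elim=> [|K [m hm]]; first by exists 0.
  have [k mk Pk] := hP m; exists k.+1.
  by rewrite count_iotaS Pk; have := count_iota_mono mk; lia.
have [m hm] := hK N.+1.
have Nm : N <= m by have := count_iota_le m; lia.
have : has P (iota N (m - N)).
  move: hm; rewrite -{1}(subnKC Nm) iotaD count_cat add0n has_count.
  by have := count_iota_le N; lia.
by case/seq.hasP=> k; rewrite mem_iota => /andP[Nk _]; exists k.
Qed.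

End CountingHits.

Definition yes_count (l : learning_fn) (Y : cantor) (m : nat) : nat :=
  count (fun k => l (pre Y k)) (iota 0 m).

Lemma yes_count_geP l Y n : yes_count_ge l Y n <-> exists m, n <= yes_count l Y m.
Proof. exact: distinct_hitsP. Qed.

Lemma size_pre Y m : size (pre Y m) = m.
Proof. exact: size_mkseq. Qed.

Lemma take_pre Y m k : k <= m -> take k (pre Y m) = pre Y k.
Proof. by move=> km; rewrite /pre /mkseq -map_take take_iota (minn_idPl km). Qed.

Definition prefix_yes (l : learning_fn) (s : bstring) : nat :=
  count (fun k => l (take k s)) (iota 0 (size s).+1).

Lemma prefix_yes_pre l Y m : prefix_yes l (pre Y m) = yes_count l Y m.+1.
Proof.
rewrite /prefix_yes size_pre; apply: eq_in_count => k.
by rewrite mem_iota ltnS => /andP[_ km] /=; rewrite take_pre.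
Qed.

Definition max_prefix_yes (l1 l2 : learning_fn) (s : bstring) : nat :=
  maxn (prefix_yes l1 s) (prefix_yes l2 s).

(* On [s = [::]] the "previous" prefix [take (size s).-1 s] is [s] itself, so the
   answer there is no. *)
Definition join_learner (l1 l2 : learning_fn) (s : bstring) : bool :=
  maxn 1 (max_prefix_yes l1 l2 (take (size s).-1 s)) < max_prefix_yes l1 l2 s.

Lemma yes_count_join l1 l2 Y m :
  yes_count (join_learner l1 l2) Y m = (maxn (yes_count l1 Y m) (yes_count l2 Y m)).-1.
Proof.
elim: m => [|m IH] //; rewrite /yes_count count_iotaS -/(yes_count _ _ m) IH.
rewrite /join_learner /max_prefix_yes size_pre take_pre ?leq_pred // !prefix_yes_pre.
(* at m = 0 both maxima are <= 1 *)
have -> : maxn 1 (maxn (yes_count l1 Y m.-1.+1) (yes_count l2 Y m.-1.+1)) =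
          maxn 1 (maxn (yes_count l1 Y m) (yes_count l2 Y m)).
  case: m {IH} => [|m] //.
  by have := count_iota_le (fun k => l1 (pre Y k)) 1;
     have := count_iota_le (fun k => l2 (pre Y k)) 1; rewrite /yes_count /=; lia.
rewrite /yes_count !count_iotaS -!/(yes_count _ _ _).
by case: (l1 _); case: (l2 _) => /=; case: ltnP; lia.
Qed.

Lemma join_yes_count_ge l1 l2 Y n :
  yes_count_ge (join_learner l1 l2) Y n.+1 -> yes_count_ge l1 Y n.+2 \/ yes_count_ge l2 Y n.+2.
Proof.
rewrite !yes_count_geP => -[m]; rewrite yes_count_join.
by case: (leqP (yes_count l1 Y m) (yes_count l2 Y m)) => _ hm; [right | left]; exists m; lia.
Qed.

Lemma join_infinitely_many_yes (l1 l2 : learning_fn) Y :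
  (forall N, exists2 m, N <= m & l1 (pre Y m)) \/ (forall N, exists2 m, N <= m & l2 (pre Y m)) ->
  forall N, exists2 m, N <= m & join_learner l1 l2 (pre Y m).
Proof.
move=> hl; apply/infinitely_many_hitsP => K.
have [m hm] : exists m, K.+1 <= maxn (yes_count l1 Y m) (yes_count l2 Y m).
  case: hl => /infinitely_many_hitsP/(_ K.+1) [m hm]; exists m; rewrite /yes_count; lia.
by exists m; rewrite -/(yes_count _ _ _) yes_count_join; lia.
Qed.

(** * The outer measure lambda *)

Section OuterMeasure.
Local Open Scope ring_scope.
Local Open Scope ereal_scope.
Notation R := Rdefinitions.R.

Definition cyl_weight (s : bstring) : \bar R := ((2%:R : R) ^- size s)%:E.

Lemma cyl_weight_ge0 s : 0 <= cyl_weight s.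
Proof. by rewrite lee_fin invr_ge0 exprn_ge0. Qed.

Definition interleave (a b : nat -> bstring) (i : nat) : bstring :=
  if odd i then b i./2 else a i./2.

Lemma interleave_partial_sum a b n :
  \sum_(0 <= i < n.*2) cyl_weight (interleave a b i) =
  \sum_(0 <= i < n) cyl_weight (a i) + \sum_(0 <= i < n) cyl_weight (b i).
Proof.
elim: n => [|n IH]; first by rewrite !big_geq // adde0.
rewrite doubleS !big_nat_recr //= IH /interleave /= odd_double /= half_double uphalf_double.
by rewrite -!addeA; congr (_ + _); rewrite addeCA.
Qed.

Lemma interleave_series_le a b :
  \sum_(0 <= i <oo) cyl_weight (interleave a b i) <=
  \sum_(0 <= i <oo) cyl_weight (a i) + \sum_(0 <= i <oo) cyl_weight (b i).
Proof.
have w0 n : (0 <= n)%N -> true -> 0 <= cyl_weight (interleave a b n) by move=> *; exact: cyl_weight_ge0.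
rewrite (cvg_lim _ (ereal_nondecreasing_cvgn (ereal_nondecreasing_series w0))) //.
apply: ge_ereal_sup => _ [n _ <-] /=.
apply: (@le_trans _ _ (\sum_(0 <= i < n.*2) cyl_weight (interleave a b i))).
  by apply: lee_sum_nneg_natr => [*|]; [exact: cyl_weight_ge0 | rewrite -addnn leq_addr].
by rewrite interleave_partial_sum; apply: leeD; apply: nneseries_lim_ge => *; exact: cyl_weight_ge0.
Qed.

Lemma cover_interleave A B a b :
  A `<=` \bigcup_i cyl (a i) -> B `<=` \bigcup_i cyl (b i) ->
  A `|` B `<=` \bigcup_i cyl (interleave a b i).
Proof.
move=> hA hB x [/hA [i _ hi]|/hB [i _ hi]].
  by exists i.*2 => //; rewrite /interleave odd_double half_double.
by exists i.*2.+1 => //; rewrite /interleave /= odd_double /= uphalf_double.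
Qed.

Lemma lambda_le (A B : set cantor) : A `<=` B -> lambda A <= lambda B.
Proof.
by move=> AB; apply: ereal_inf_le_tmp => _ [c hc <-]; exists c => //; exact: subset_trans hc.
Qed.

Lemma lambda_setU_le A B (x y : R) :
  lambda A <= x%:E -> lambda B <= y%:E -> lambda (A `|` B) <= (x + y)%:E.
Proof.
move=> hA hB; apply/lee_addgt0Pr => e e0.
have e2 : (0 < e / 2)%R by rewrite divr_gt0.
have /ereal_inf_lt [_ [a ca <-] sa] : lambda A < (x + e / 2)%:E.
  by apply: le_lt_trans hA _; rewrite lte_fin ltrDl.
have /ereal_inf_lt [_ [b cb <-] sb] : lambda B < (y + e / 2)%:E.
  by apply: le_lt_trans hB _; rewrite lte_fin ltrDl.
apply: (@le_trans _ _ (\sum_(0 <= i <oo) cyl_weight (interleave a b i))).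
  by apply: ereal_inf_lbound; exists (interleave a b) => //; exact: cover_interleave.
apply: le_trans (interleave_series_le a b) _.
have -> : (x + y)%:E + e%:E = (x + e / 2)%:E + (y + e / 2)%:E.
  by rewrite -!EFinD; congr (_%:E); rewrite [RHS]addrACA -splitr.
by apply: leeD; apply: ltW.
Qed.

Lemma exp2_halves n : ((2%:R : R) ^- n.+1 + (2%:R : R) ^- n.+1 = (2%:R : R) ^- n)%R.
Proof.
have halves : ((2%:R : R)^-1 + (2%:R : R)^-1 = 1)%R by rewrite -div1r -splitr.
by rewrite exprSr invfM -mulrDr halves mulr1.
Qed.

Lemma join_yes_measure l1 l2 :
  (forall n, lambda [set Y | yes_count_ge l1 Y n] <= ((2%:R : R) ^- n)%:E) ->
  (forall n, lambda [set Y | yes_count_ge l2 Y n] <= ((2%:R : R) ^- n)%:E) ->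
  forall n, lambda [set Y | yes_count_ge (join_learner l1 l2) Y n] <= ((2%:R : R) ^- n)%:E.
Proof.
move=> h1 h2 [|n].
  by apply: le_trans (h1 0%N); apply: lambda_le => Y _; exists [::].
rewrite -exp2_halves; apply: le_trans (lambda_setU_le (h1 n.+2) (h2 n.+2)).
by apply: lambda_le => Y /join_yes_count_ge.
Qed.

End OuterMeasure.

Lemma join_detects_all (G1 G2 : set cantor) l1 l2 :
  unif_weak_detects_all l1 G1 -> unif_weak_detects_all l2 G2 ->
  G1 !=set0 -> G2 !=set0 -> unif_weak_detects_all (join_learner l1 l2) (G1 `|` G2).
Proof.
move=> H1 H2 [X1 /H1 [_ m1]] [X2 /H2 [_ m2]] X GX; split; last exact: join_yes_measure.
by apply: join_infinitely_many_yes; case: GX => [/H1 | /H2] [hX _]; [left | right].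
Qed.

(** * Partial recursive functions *)

Lemma peval_comp1 f g xs y z :
  peval g xs y -> peval f [:: y] z -> peval (PComp f [:: g]) xs z.
Proof. by move=> hg hf; apply: ev_comp hf; apply: evs_cons hg (evs_nil _). Qed.

Lemma peval_comp2 f g1 g2 xs y1 y2 z :
  peval g1 xs y1 -> peval g2 xs y2 -> peval f [:: y1; y2] z ->
  peval (PComp f [:: g1; g2]) xs z.
Proof.
by move=> h1 h2 hf; apply: ev_comp hf; apply: evs_cons h1 (evs_cons h2 (evs_nil _)).
Qed.

Lemma peval_rec g h xs (F : nat -> nat) :
  peval g xs (F 0) -> (forall n, peval h [:: n, F n & xs] (F n.+1)) ->
  forall n, peval (PRec g h) (n :: xs) (F n).
Proof. by move=> h0 hS; elim=> [|n IH]; [apply: ev_rec0 | apply: ev_recS IH (hS n)]. Qed.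

Lemma peval_proj0 x xs : peval (PProj 0) (x :: xs) x.
Proof. exact: (ev_proj 0 (x :: xs)). Qed.

Lemma peval_proj1 x y xs : peval (PProj 1) [:: x, y & xs] y.
Proof. exact: (ev_proj 1 [:: x, y & xs]). Qed.

Lemma peval_proj2 x y z xs : peval (PProj 2) [:: x, y, z & xs] z.
Proof. exact: (ev_proj 2 [:: x, y, z & xs]). Qed.

Arguments peval_proj0 {x xs}.
Arguments peval_proj1 {x y xs}.
Arguments peval_proj2 {x y z xs}.

Definition prf_one : prf := PComp PSucc [:: PZero].

Lemma peval_one xs : peval prf_one xs 1.
Proof. by apply: (peval_comp1 (y := 0)); [apply: ev_zero | apply: (ev_succ [:: 0])]. Qed.

Definition prf_pred : prf := PComp (PRec PZero (PProj 0)) [:: PProj 0].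

Lemma peval_pred x : peval prf_pred [:: x] x.-1.
Proof.
apply: peval_comp1 peval_proj0 _.
by apply: (peval_rec (F := predn)) => [|n]; [exact: ev_zero | exact: peval_proj0].
Qed.

Definition prf_sub : prf := PComp (PRec (PProj 0) (PComp prf_pred [:: PProj 1])) [:: PProj 1; PProj 0].

Lemma peval_sub a b : peval prf_sub [:: a; b] (a - b).
Proof.
apply: (peval_comp2 peval_proj1 peval_proj0).
apply: (peval_rec (F := fun n => a - n)) => [|n]; first by rewrite subn0; exact: peval_proj0.
by apply: peval_comp1 peval_proj1 _; rewrite subnS; apply: peval_pred.
Qed.

Definition prf_add : prf := PComp (PRec (PProj 0) (PComp PSucc [:: PProj 1])) [:: PProj 0; PProj 1].

Lemma peval_add a b : peval prf_add [:: a; b] (a + b).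
Proof.
apply: (peval_comp2 peval_proj0 peval_proj1).
apply: (peval_rec (F := fun n => n + b)) => [|n]; first exact: peval_proj0.
by apply: peval_comp1 peval_proj1 _; apply: (ev_succ [:: n + b]).
Qed.

Definition prf_max : prf := PComp prf_add [:: PProj 0; PComp prf_sub [:: PProj 1; PProj 0]].

Lemma peval_max a b : peval prf_max [:: a; b] (maxn a b).
Proof.
apply: (peval_comp2 peval_proj0 (peval_comp2 peval_proj1 peval_proj0 (peval_sub b a))).
by rewrite maxnE; apply: peval_add.
Qed.

Definition prf_sgn : prf := PComp (PRec PZero prf_one) [:: PProj 0].

Lemma peval_sgn x : peval prf_sgn [:: x] (0 < x).
Proof.
apply: peval_comp1 peval_proj0 _.
by apply: (peval_rec (F := fun n => nat_of_bool (0 < n))) => [|n]; [exact: ev_zero | exact: peval_one].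
Qed.

Definition prf_lt : prf := PComp prf_sgn [:: PComp prf_sub [:: PProj 1; PProj 0]].

Lemma peval_lt a b : peval prf_lt [:: a; b] (a < b).
Proof.
apply: (peval_comp1 (peval_comp2 peval_proj1 peval_proj0 (peval_sub b a))).
by rewrite -subn_gt0; apply: peval_sgn.
Qed.

Definition prf_odd : prf := PComp (PRec PZero (PComp prf_sub [:: prf_one; PProj 1])) [:: PProj 0].

Lemma peval_odd x : peval prf_odd [:: x] (odd x).
Proof.
apply: peval_comp1 peval_proj0 _.
apply: (peval_rec (F := fun n => nat_of_bool (odd n))) => [|n]; first exact: ev_zero.
apply: (peval_comp2 (peval_one _) peval_proj1).
by rewrite oddS; case: (odd n); exact: peval_sub.
Qed.

Definition prf_half : prf :=
  PComp (PRec PZero (PComp prf_add [:: PProj 1; PComp prf_odd [:: PProj 0]])) [:: PProj 0].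

Lemma peval_half x : peval prf_half [:: x] x./2.
Proof.
apply: peval_comp1 peval_proj0 _.
apply: (peval_rec (F := half)) => [|n]; first exact: ev_zero.
apply: (peval_comp2 peval_proj1 (peval_comp1 peval_proj0 (peval_odd n))).
by rewrite /= uphalf_half addnC; apply: peval_add.
Qed.

Definition prf_iter_half : prf := PRec (PProj 0) (PComp prf_half [:: PProj 1]).

Lemma peval_iter_half j x : peval prf_iter_half [:: j; x] (iter j half x).
Proof.
apply: (peval_rec (F := fun j => iter j half x)) => [|k]; first exact: peval_proj0.
by apply: peval_comp1 peval_proj1 _; apply: peval_half.
Qed.

Definition prf_sum (f : prf) : prf :=
  PRec (PComp f [:: PZero; PProj 0]) (PComp prf_add [:: PProj 1; PComp f [:: PSucc; PProj 2]]).

Lemma peval_sum f x (F : nat -> nat) :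
  (forall j, peval f [:: j; x] (F j)) ->
  forall J, peval (prf_sum f) [:: J; x] (\sum_(j < J.+1) F j).
Proof.
move=> hf; apply: peval_rec => [|n].
  by rewrite big_ord1; exact: (peval_comp2 (ev_zero _) peval_proj0 (hf 0)).
have hS : peval PSucc [:: n, \sum_(j < n.+1) F j & [:: x]] n.+1 by exact: ev_succ.
apply: (peval_comp2 peval_proj1 (peval_comp2 hS peval_proj2 (hf n.+1))).
by rewrite [X in peval _ _ X]big_ord_recr; exact: peval_add.
Qed.

Lemma enc_rcons s b : enc (rcons s b) = b + (enc s).*2.
Proof. by rewrite /enc foldl_rcons addnC. Qed.

Lemma size_lt_enc s : size s < enc s.
Proof. by elim/last_ind: s => [|s b IH] //; rewrite enc_rcons size_rcons; case: b => /=; lia. Qed.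

Lemma enc_gt0 s : 0 < enc s.
Proof. exact: leq_ltn_trans (leq0n _) (size_lt_enc s). Qed.

Lemma half_enc s : (enc s)./2 = if s is [::] then 0 else enc (take (size s).-1 s).
Proof.
case/lastP: s => [|s b] //; rewrite enc_rcons half_bit_double size_rcons -cats1 take_size_cat //.
by case: s.
Qed.

Lemma enc_take_predn s : enc (take (size s).-1 s) = maxn 1 (enc s)./2.
Proof. by rewrite half_enc; case: s => // b s; rewrite (maxn_idPr (enc_gt0 _)). Qed.

Lemma iter_half_enc s j :
  iter j half (enc s) = if j <= size s then enc (take (size s - j) s) else 0.
Proof.
elim: j => [|j IH]; first by rewrite subn0 take_size.
rewrite iterS IH; case: (ltngtP j (size s)) => js.
- have szt := size_takel (leq_subr j (size s)).
  rewrite half_enc szt take_takel ?leq_pred // -subnS.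
  by case: (take _ s) szt => //= szt; lia.
- by [].
- by rewrite js subnn take0.
Qed.

Lemma prefix_yes_rev_sum (l : learning_fn) s J : size s <= J ->
  prefix_yes l s = \sum_(j < J.+1) (if j <= size s then l (take (size s - j) s) : nat else 0).
Proof.
move=> sJ; rewrite -big_mkcond /=.
under eq_bigl => j do rewrite -ltnS.
rewrite -(big_ord_widen _ (fun j => nat_of_bool (l (take (size s - j) s)))) //.
rewrite /prefix_yes -sum1_count big_mkcond.
rewrite -[iota 0 _]/(index_iota 0 (size s).+1) big_rev_mkord subn0.
by apply: eq_bigr => j _; rewrite subSS; case: (l _).
Qed.

Definition computes (c : prf) (l : learning_fn) : Prop :=
  forall s, peval c [:: enc s] (l s).

(* Runs [c] on [maxn x 1] and subtracts [1 - sgn x]; when [c] outputs a bit, this is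
   [c x] for [x > 0] and [0] for [x = 0], which codes no string. *)
Definition prf_guard (c : prf) : prf :=
  PComp prf_sub [:: PComp c [:: PComp prf_max [:: PProj 0; prf_one]];
                    PComp prf_sub [:: prf_one; PComp prf_sgn [:: PProj 0]]].

Definition prf_prefix_term (c : prf) : prf := PComp (prf_guard c) [:: prf_iter_half].

Definition prf_prefix_yes (c : prf) : prf :=
  PComp (prf_sum (prf_prefix_term c)) [:: PProj 0; PProj 0].

Definition prf_max_prefix_yes (c1 c2 : prf) : prf :=
  PComp prf_max [:: prf_prefix_yes c1; prf_prefix_yes c2].

Definition prf_join (c1 c2 : prf) : prf :=
  PComp prf_lt
    [:: PComp prf_max [:: prf_one; PComp (prf_max_prefix_yes c1 c2)
                                     [:: PComp prf_max [:: prf_one; prf_half]]];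
        prf_max_prefix_yes c1 c2].

Lemma peval_guard c x b y : peval c [:: maxn x 1] b -> y = b - (1 - (0 < x)) ->
  peval (prf_guard c) [:: x] y.
Proof.
move=> hb ->.
apply: peval_comp2 (peval_comp1 (peval_comp2 peval_proj0 (peval_one _) (peval_max _ _)) hb)
                   (peval_comp2 (peval_one _) (peval_comp1 peval_proj0 (peval_sgn _)) (peval_sub _ _))
                   (peval_sub _ _).
Qed.

Section PrefixYesCode.
Variables (c : prf) (l : learning_fn).
Hypothesis hc : computes c l.

Lemma peval_prefix_term s j :
  peval (prf_prefix_term c) [:: j; enc s]
    (if j <= size s then l (take (size s - j) s) : nat else 0).
Proof.
apply: peval_comp1 (peval_iter_half j (enc s)) _; rewrite iter_half_enc.
case: ifP => _; apply: (peval_guard (b := l _)).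
- by rewrite (maxn_idPl (enc_gt0 _)).
- by rewrite enc_gt0 subn0.
- exact: (hc [::]).
- by case: (l _).
Qed.

Lemma peval_prefix_yes s : peval (prf_prefix_yes c) [:: enc s] (prefix_yes l s).
Proof.
apply: peval_comp2 peval_proj0 peval_proj0 _.
rewrite (prefix_yes_rev_sum l (ltnW (size_lt_enc s))).
exact: (peval_sum (F := fun j => if j <= size s then l (take (size s - j) s) : nat else 0)
  (peval_prefix_term s)).
Qed.

End PrefixYesCode.

Lemma peval_max_prefix_yes c1 c2 l1 l2 s : computes c1 l1 -> computes c2 l2 ->
  peval (prf_max_prefix_yes c1 c2) [:: enc s] (max_prefix_yes l1 l2 s).
Proof. by move=> h1 h2; apply: peval_comp2 (peval_max _ _); exact: peval_prefix_yes. Qed.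

Lemma computable_join l1 l2 :
  computable l1 -> computable l2 -> computable (join_learner l1 l2).
Proof.
move=> [c1 h1] [c2 h2]; exists (prf_join c1 c2) => s.
apply: peval_comp2 (peval_lt _ _); last exact: peval_max_prefix_yes.
apply: peval_comp2 (peval_one _) _ (peval_max _ _).
apply: peval_comp1 _ (peval_max_prefix_yes _ h1 h2).
by rewrite enc_take_predn; apply: peval_comp2 (peval_one _) (peval_half _) (peval_max _ _).
Qed.

Theorem mainTheorem3 (G1 G2 : set cantor) (l1 l2 : learning_fn) :
  unif_weak_detects_all l1 G1 ->
  unif_weak_detects_all l2 G2 ->
  (exists l3 : learning_fn, unif_weak_detects_all l3 (G1 `|` G2)) /\
  (computable l1 -> computable l2 ->
     exists l3 : learning_fn, computable l3 /\ unif_weak_detects_all l3 (G1 `|` G2)).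
Proof.
move=> H1 H2.
suff [l [Hl Cl]] : exists l, unif_weak_detects_all l (G1 `|` G2) /\
    (computable l1 -> computable l2 -> computable l).
  by split=> [|/Cl C1 /C1 C]; exists l.
have [->|/set0P G1n0] := eqVneq G1 set0.
  by exists l2; rewrite set0U.
have [->|/set0P G2n0] := eqVneq G2 set0.
  by exists l1; rewrite setU0.
by exists (join_learner l1 l2); split; [exact: join_detects_all | exact: computable_join].
Qed.
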